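(* Let $\epsilon\in(0,1)$, $u_0\in\mathbb{R}\setminus\{0,1,-1\}$, and let $h^*=\frac{\epsilon^2}{u_0^2+|u_0|}$ if $|u_0|>1$ and $h^*=\frac{\epsilon^2}{2}$ if $0<|u_0|<1$. For every $h\in(0,h^*]$, the sequence $(u_n)_{n\ge0}$ generated by the explicit Euler scheme $$\frac{u_n-u_{n-1}}{h}+\frac{1}{\epsilon^2}\big(u_{n-1}^3-u_{n-1}\big)=0,\qquad n\ge 1,$$ satisfies $E(u_n)\le E(u_{n-1})$ for all $n\ge1$, where $E(v)=\frac{1}{4\epsilon^2}(v^2-1)^2$.
   Context: The scheme discretizes the ODE $u'(t)+\frac{1}{\epsilon^2}(u^3-u)=0$, $u(0)=u_0$, whose energy is $E(u)=\frac{1}{\epsilon^2}F(u)$ with $F(u)=\frac14(u^2-1)^2$. *)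

From Stdlib Require Import Reals.
Open Scope R_scope.

Definition F (u : R) : R := / 4 * (u ^ 2 - 1) ^ 2.
Definition energy (eps u : R) : R := / eps ^ 2 * F u.

Fixpoint euler (eps h u0 : R) (n : nat) : R :=
  match n with
  | O => u0
  | S m => let v := euler eps h u0 m in v - h / eps ^ 2 * (v ^ 3 - v)
  end.

Definition hstar (eps u0 : R) : R :=
  if Rlt_dec 1 (Rabs u0) then eps ^ 2 / (u0 ^ 2 + Rabs u0) else eps ^ 2 / 2.

(* With [k = h / eps^2] one Euler step is [v |-> v (1 - k (v^2 - 1))], and for
   [a = |v|] with [k a (a + 1) <= 1] it satisfies the identity
   [|v'| - 1 = (1 - k a (a + 1)) (a - 1)]: the new modulus is a convex
   combination of [a] and [1].  Hence the moduli stay on the side of [1] where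
   they start and move monotonically towards [1], and the energy, a function of
   [|u^2 - 1|], decreases.  The bound [h <= h^*] is exactly what makes
   [k a (a + 1) <= 1] hold along the whole trajectory: for [a <= |u0|] when
   [|u0| > 1], and for [a <= 1] when [|u0| <= 1]. *)
From Stdlib Require Import Reals Lra Psatz.
Open Scope R_scope.

Definition euler_step (k v : R) : R := v - k * (v ^ 3 - v).

Lemma euler_S (eps h u0 : R) (n : nat) :
  euler eps h u0 (S n) = euler_step (h / eps ^ 2) (euler eps h u0 n).
Proof. reflexivity. Qed.

Lemma pow2_Rabs (x : R) : Rabs x ^ 2 = x ^ 2.
Proof. now rewrite <- (pow2_abs x). Qed.

Section EulerStep.

Variables k v : R.
Hypothesis k_ge0 : 0 <= k.
Hypothesis k_small : k * (Rabs v * (Rabs v + 1)) <= 1.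

Lemma Rabs_euler_step_sub1 :
  Rabs (euler_step k v) - 1 = (1 - k * (Rabs v * (Rabs v + 1))) * (Rabs v - 1).
Proof.
  set (a := Rabs v) in *.
  assert (a_ge0 : 0 <= a) by apply Rabs_pos.
  assert (factor_ge0 : 0 <= 1 - k * (v ^ 2 - 1)).
  { rewrite <- pow2_Rabs; fold a. nra. }
  replace (euler_step k v) with (v * (1 - k * (v ^ 2 - 1)))
    by (unfold euler_step; ring).
  rewrite Rabs_mult, (Rabs_pos_eq _ factor_ge0), <- pow2_Rabs; fold a.
  ring.
Qed.

Lemma Rabs_euler_step_outer :
  1 <= Rabs v -> 1 <= Rabs (euler_step k v) <= Rabs v.
Proof.
  intros v_ge1.
  pose proof Rabs_euler_step_sub1 as sub1.
  assert (0 <= k * (Rabs v * (Rabs v + 1))) by (pose proof (Rabs_pos v); nra).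
  assert (0 <= (1 - k * (Rabs v * (Rabs v + 1))) * (Rabs v - 1))
    by (apply Rmult_le_pos; lra).
  nra.
Qed.

Lemma Rabs_euler_step_inner :
  Rabs v <= 1 -> Rabs v <= Rabs (euler_step k v) <= 1.
Proof.
  intros v_le1.
  pose proof Rabs_euler_step_sub1 as sub1.
  assert (0 <= k * (Rabs v * (Rabs v + 1))) by (pose proof (Rabs_pos v); nra).
  assert (0 <= (1 - k * (Rabs v * (Rabs v + 1))) * (1 - Rabs v))
    by (apply Rmult_le_pos; lra).
  nra.
Qed.

End EulerStep.

Section EulerTrajectory.

Variables eps h u0 : R.
Hypothesis k_ge0 : 0 <= h / eps ^ 2.

Lemma Rabs_euler_outer :
  1 <= Rabs u0 -> h / eps ^ 2 * (Rabs u0 * (Rabs u0 + 1)) <= 1 ->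
  forall n, 1 <= Rabs (euler eps h u0 (S n)) <= Rabs (euler eps h u0 n).
Proof.
  intros u0_ge1 k_small.
  assert (k_small_le : forall a, 0 <= a <= Rabs u0 ->
                         h / eps ^ 2 * (a * (a + 1)) <= 1) by (intros; nra).
  assert (bounds : forall n, 1 <= Rabs (euler eps h u0 n) <= Rabs u0).
  { induction n as [|n IH]; [simpl; lra|].
    rewrite euler_S.
    pose proof (Rabs_euler_step_outer _ _ k_ge0
                  (k_small_le _ (conj (Rabs_pos _) (proj2 IH))) (proj1 IH)).
    lra. }
  intros n. rewrite euler_S.
  pose proof (bounds n) as [lo hi].
  pose proof (Rabs_euler_step_outer _ _ k_ge0
                (k_small_le _ (conj (Rabs_pos _) hi)) lo).
  lra.
Qed.

Lemma Rabs_euler_inner :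
  Rabs u0 <= 1 -> h / eps ^ 2 * 2 <= 1 ->
  forall n, Rabs (euler eps h u0 n) <= Rabs (euler eps h u0 (S n)) <= 1.
Proof.
  intros u0_le1 k_small.
  assert (k_small_le : forall a, 0 <= a <= 1 ->
                         h / eps ^ 2 * (a * (a + 1)) <= 1) by (intros; nra).
  assert (bound : forall n, Rabs (euler eps h u0 n) <= 1).
  { induction n as [|n IH]; [simpl; lra|].
    rewrite euler_S.
    pose proof (Rabs_euler_step_inner _ _ k_ge0
                  (k_small_le _ (conj (Rabs_pos _) IH)) IH).
    lra. }
  intros n. rewrite euler_S.
  exact (Rabs_euler_step_inner _ _ k_ge0
           (k_small_le _ (conj (Rabs_pos _) (bound n))) (bound n)).
Qed.

End EulerTrajectory.

Lemma F_Rabs (u : R) : F (Rabs u) = F u.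
Proof. unfold F. now rewrite pow2_Rabs. Qed.

Lemma F_le_outer (a b : R) : 1 <= b <= a -> F b <= F a.
Proof.
  intros b_between. unfold F.
  assert (0 <= b ^ 2 - 1 <= a ^ 2 - 1) by (simpl; nra).
  apply Rmult_le_compat_l; [lra|]. simpl; nra.
Qed.

Lemma F_le_inner (a b : R) : 0 <= a -> a <= b <= 1 -> F b <= F a.
Proof.
  intros a_ge0 b_between. unfold F.
  assert (0 <= 1 - b ^ 2 <= 1 - a ^ 2) by (simpl; nra).
  apply Rmult_le_compat_l; [lra|]. simpl; nra.
Qed.

Lemma energy_le (eps x y : R) : 0 < eps -> F x <= F y -> energy eps x <= energy eps y.
Proof.
  intros eps_gt0 F_le. unfold energy.
  apply Rmult_le_compat_l; [|assumption].
  left. apply Rinv_0_lt_compat, pow_lt. assumption.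
Qed.

Lemma Rle_div_mul_le_1 (a b c : R) : 0 < a -> 0 < b -> c <= a / b -> c / a * b <= 1.
Proof.
  intros a_gt0 b_gt0 c_le.
  replace (c / a * b) with (c * (b / a)) by (field; lra).
  replace 1 with (a / b * (b / a)) by (field; lra).
  apply Rmult_le_compat_r; [apply Rle_mult_inv_pos; lra|assumption].
Qed.

Lemma hstar_outer (eps u0 h : R) :
  0 < eps -> 1 < Rabs u0 -> h <= hstar eps u0 ->
  h / eps ^ 2 * (Rabs u0 * (Rabs u0 + 1)) <= 1.
Proof.
  intros eps_gt0 u0_gt1. unfold hstar.
  destruct (Rlt_dec 1 (Rabs u0)); [|contradiction].
  replace (Rabs u0 * (Rabs u0 + 1)) with (u0 ^ 2 + Rabs u0)
    by (rewrite <- (pow2_Rabs u0); ring).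
  apply Rle_div_mul_le_1; [apply pow_lt; lra|].
  pose proof (pow2_ge_0 u0). lra.
Qed.

Lemma hstar_inner (eps u0 h : R) :
  0 < eps -> ~ 1 < Rabs u0 -> h <= hstar eps u0 -> h / eps ^ 2 * 2 <= 1.
Proof.
  intros eps_gt0 u0_le1. unfold hstar.
  destruct (Rlt_dec 1 (Rabs u0)); [contradiction|].
  apply Rle_div_mul_le_1; [apply pow_lt|]; lra.
Qed.

Theorem theorem2p3 (eps u0 h : R) :
  0 < eps < 1 ->
  u0 <> 0 -> u0 <> 1 -> u0 <> -1 ->
  0 < h <= hstar eps u0 ->
  forall n : nat, (1 <= n)%nat ->
    energy eps (euler eps h u0 n) <= energy eps (euler eps h u0 (n - 1)).
Proof.
  intros [eps_gt0 _] _ _ _ [h_gt0 h_le] [|m] n_ge1; [lia|].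
  replace (S m - 1)%nat with m by lia.
  assert (k_ge0 : 0 <= h / eps ^ 2)
    by (apply Rle_mult_inv_pos; [lra|apply pow_lt; lra]).
  apply energy_le; [assumption|].
  rewrite <- (F_Rabs (euler eps h u0 (S m))), <- (F_Rabs (euler eps h u0 m)).
  destruct (Rlt_dec 1 (Rabs u0)) as [u0_gt1|u0_le1].
  - apply F_le_outer.
    exact (Rabs_euler_outer eps h u0 k_ge0 (Rlt_le _ _ u0_gt1)
             (hstar_outer eps u0 h eps_gt0 u0_gt1 h_le) m).
  - apply F_le_inner; [apply Rabs_pos|].
    exact (Rabs_euler_inner eps h u0 k_ge0 (Rnot_lt_le _ _ u0_le1)
             (hstar_inner eps u0 h eps_gt0 u0_le1 h_le) m).
Qed.
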